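(* Let $V$ be a finite-dimensional scalar product space, $T$ a self-adjoint operator on $V$, $\lambda$ an eigenvalue of $T$, and $U=T-\lambda I$. Let $x\in K_\lambda$ generate a cycle of generalized eigenvectors of length $p$ (i.e. $p$ is the smallest positive integer with $U^p x=0$), put $v_i=U^{p-i}x$ for $i=1,\dots,p$, and let $H=\operatorname{span}\{v_1,\dots,v_p\}$. If $\langle v_1,v_p\rangle\neq 0$, then there exists $x'\in H$ generating a cycle of generalized eigenvectors $v'_i=U^{p-i}x'$ ($i=1,\dots,p$) of length $p$ which spans $H$, such that $v'_1,\dots,v'_p$ is a skew-normal sequence whose sign is $\operatorname{sgn}\langle v_1,v_p\rangle$ if $\lambda\in\mathbb{R}$, and $1$ if $\lambda\in\mathbb{C}\setminus\mathbb{R}$.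
   Context: A scalar product is a non-degenerate symmetric bilinear form $\langle\cdot,\cdot\rangle$ over $\mathbb{R}$ or $\mathbb{C}$ (bilinear in the complex case). $T$ is self-adjoint if $\langle Tx,y\rangle=\langle x,Ty\rangle$ for all $x,y$. If $V$ is real, non-real eigenvalues and their generalized eigenspaces are taken in the complexification $V^{\mathbb{C}}$ with the bilinear extension of the scalar product and of $T$; when $\lambda$ is real, everything takes place in the real space $V$ (so $x$ is real and $\langle v_1,v_p\rangle$ is real). $K_\lambda=\{x:(T-\lambda I)^m x=0\text{ for some }m\ge1\}$. A sequence $w_1,\dots,w_p$ is a skew-normal sequence of sign $\varepsilon\in\{\pm1\}$ if $\langle w_i,w_j\rangle=\varepsilon$ when $i+j=p+1$ and $0$ otherwise. *)

From HB Require Import structures.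
From mathcomp Require Import all_boot all_order all_algebra.
Set Implicit Arguments. Unset Strict Implicit. Unset Printing Implicit Defensive.
Import Order.TTheory GRing.Theory Num.Theory.
Local Open Scope ring_scope.

Section Defs.
Variable F : fieldType.

Definition scalar_product (V : lmodType F) (b : V -> V -> F) : Prop :=
  [/\ (forall x y, b x y = b y x),
      (forall a x y z, b (a *: x + y) z = a * b x z + b y z)
    & (forall x, (forall y, b x y = 0) -> x = 0)].

Definition self_adjoint (V : lmodType F) (b : V -> V -> F) (T : V -> V) : Prop :=
  forall x y, b (T x) y = b x (T y).

Definition is_eigenvalue (V : lmodType F) (T : V -> V) (lam : F) : Prop :=
  exists v, v != 0 /\ T v = lam *: v.

Definition Uop (V : lmodType F) (T : V -> V) (lam : F) : V -> V :=
  fun x => T x - lam *: x.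

Definition cycle_len (V : lmodType F) (T : V -> V) (lam : F) (x : V) (p : nat) : Prop :=
  [/\ (0 < p)%N, iter p (Uop T lam) x = 0
    & forall k, (0 < k < p)%N -> iter k (Uop T lam) x != 0].

Definition cyc_vec (V : lmodType F) (T : V -> V) (lam : F) (x : V) (p : nat) (i : nat) : V :=
  iter (p - i) (Uop T lam) x.

Definition cyc_span (V : vectType F) (T : V -> V) (lam : F) (x : V) (p : nat) : {vspace V} :=
  (<<[seq cyc_vec T lam x p i | i <- iota 1 p]>>)%VS.

Definition skew_normal (V : lmodType F) (b : V -> V -> F) (w : nat -> V) (p : nat) (eps : F) : Prop :=
  (eps = 1 \/ eps = -1) /\
  forall i j, (1 <= i <= p)%N -> (1 <= j <= p)%N ->
    b (w i) (w j) = (if (i + j == p.+1)%N then eps else 0).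

End Defs.

From HB Require Import structures.
From mathcomp Require Import all_boot all_order all_algebra.
From mathcomp Require Import zify ring.
Import Order.TTheory GRing.Theory Num.Theory.
Set Implicit Arguments. Unset Strict Implicit. Unset Printing Implicit Defensive.
Local Open Scope ring_scope.

(* Put U = T - lam and B y k = <y, U^k y>.  Since U is self-adjoint, <U^i y, U^j y> = B y (i + j),
   and B y k = 0 for k >= p whenever y lies in H, on which U^p vanishes.  Scaling x by a square
   root s of <v_1, v_p>^-1 (of |<v_1, v_p>|^-1 over a real closed field) makes B y (p - 1) = +-1.
   The pairings B y k, k < p - 1, are then cleared from k = p - 2 downwards: replacing y by
   y + a U^m y changes B y k by 2 a B y (k + m) + a^2 B y (k + 2m), so with k + m = p - 1 a suitable
   a kills B y k without touching the pairings of larger index.  The resulting y still has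
   U^(p-1) y <> 0, hence generates a cycle of length p spanning H, and its vectors are
   skew-normal. *)

Section CycleSpan.
Variables (F : fieldType) (V : vectType F) (T : 'End(V)) (lam : F).
Local Notation U := (Uop T lam).

Definition Upow (n : nat) : 'End(V) := iter n (comp_lfun (T - lam *: \1)%VF) \1%VF.

Lemma UpowE n v : Upow n v = iter n U v.
Proof.
elim: n => [|n IH] /=; first by rewrite id_lfunE.
by rewrite comp_lfunE IH add_lfunE opp_lfunE scale_lfunE id_lfunE.
Qed.

Lemma iter_UopP n a u v : iter n U (a *: u + v) = a *: iter n U u + iter n U v.
Proof. by rewrite -!UpowE linearP. Qed.

Lemma iter_UopZ n a u : iter n U (a *: u) = a *: iter n U u.
Proof. by rewrite -!UpowE linearZ. Qed.

Lemma iter_Uop0 n : iter n U 0 = 0.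
Proof. by rewrite -UpowE linear0. Qed.

Lemma iter_Uop_eq0_ge x p m : iter p U x = 0 -> (p <= m)%N -> iter m U x = 0.
Proof. by move=> Upx le_pm; rewrite -(subnK le_pm) iterD Upx iter_Uop0. Qed.

Lemma cyc_spanE x p : cyc_span T lam x p = <<[seq iter j U x | j <- iota 0 p]>>%VS.
Proof.
apply: eq_span => v; apply/mapP/mapP => -[i]; rewrite mem_iota => i_range ->.
  by exists (p - i)%N => //; rewrite mem_iota; lia.
by exists (p - i)%N; [rewrite mem_iota; lia | rewrite /cyc_vec; congr iter; lia].
Qed.

Lemma iter_Uop_cyc_span x p j : (j < p)%N -> iter j U x \in cyc_span T lam x p.
Proof. by move=> lt_jp; rewrite cyc_spanE; apply/memv_span/map_f; rewrite mem_iota. Qed.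

Lemma cyc_span_iter_Uop x p n v :
  iter p U x = 0 -> v \in cyc_span T lam x p -> iter n U v \in cyc_span T lam x p.
Proof.
move=> Upx; rewrite -UpowE memv_preim; apply/subvP; rewrite {1}cyc_spanE.
apply/span_subvP => _ /mapP [j _ ->]; rewrite -memv_preim UpowE -iterD.
have [lt_p|ge_p] := ltnP (n + j) p; first exact: iter_Uop_cyc_span.
by rewrite (iter_Uop_eq0_ge Upx ge_p) mem0v.
Qed.

Lemma cyc_span_iter_Uop_eq0 x p n v :
  iter p U x = 0 -> (p <= n)%N -> v \in cyc_span T lam x p -> iter n U v = 0.
Proof.
move=> Upx le_pn v_in; apply/eqP; rewrite -UpowE -memv_ker; apply: subvP v_in.
rewrite cyc_spanE; apply/span_subvP => _ /mapP [j _ ->].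
by rewrite memv_ker UpowE -iterD (iter_Uop_eq0_ge Upx) //; lia.
Qed.

Lemma free_iter_Uop y p :
  iter p U y = 0 -> iter p.-1 U y != 0 -> free [seq iter j U y | j <- iota 0 p].
Proof.
move=> Upy Up1y.
suff free_tail : forall d, (d <= p)%N -> free [seq iter j U y | j <- iota (p - d) d].
  by have := free_tail p (leqnn p); rewrite subnn.
elim=> [|d IHd] le_dp; first by rewrite nil_free.
have -> : iota (p - d.+1) d.+1 = (p - d.+1)%N :: iota (p - d) d.
  by rewrite /=; congr (_ :: iota _ _); lia.
rewrite /= free_cons IHd ?andbT; last lia.
have tail_ker : (<<[seq iter j U y | j <- iota (p - d) d]>> <= lker (Upow d))%VS.
  apply/span_subvP => w /mapP [j]; rewrite mem_iota => j_range ->.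
  by rewrite memv_ker UpowE -iterD (iter_Uop_eq0_ge Upy) //; lia.
apply: contra Up1y => /(subvP tail_ker); rewrite memv_ker UpowE -iterD.
by have -> : (d + (p - d.+1))%N = p.-1 by lia.
Qed.

Lemma dim_cyc_span y p :
  iter p U y = 0 -> iter p.-1 U y != 0 -> \dim (cyc_span T lam y p) = p.
Proof.
by move=> Upy Up1y; rewrite cyc_spanE (eqP (free_iter_Uop Upy Up1y)) size_map size_iota.
Qed.

Lemma dim_cyc_span_le x p : (\dim (cyc_span T lam x p) <= p)%N.
Proof. by rewrite cyc_spanE (leq_trans (dim_span _)) // size_map size_iota. Qed.

Lemma cyc_span_eq x y p :
  iter p U x = 0 -> y \in cyc_span T lam x p -> iter p.-1 U y != 0 ->
  cyc_span T lam y p = cyc_span T lam x p.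
Proof.
move=> Upx y_in Up1y; have Upy := cyc_span_iter_Uop_eq0 Upx (leqnn p) y_in.
apply/eqP; rewrite eqEdim (dim_cyc_span Upy Up1y) dim_cyc_span_le andbT.
by rewrite cyc_spanE; apply/span_subvP => _ /mapP [j _ ->]; apply: cyc_span_iter_Uop.
Qed.

Lemma cycle_len_of_last y p :
  (0 < p)%N -> iter p U y = 0 -> iter p.-1 U y != 0 -> cycle_len T lam y p.
Proof.
move=> p_gt0 Upy Up1y; split=> // k /andP [_ lt_kp]; apply: contra Up1y => /eqP Uky.
by rewrite -(subnK (_ : k <= p.-1)%N) ?iterD ?Uky ?iter_Uop0 //; lia.
Qed.

End CycleSpan.

Section ScalarProduct.
Variables (F : fieldType) (V : lmodType F) (b : V -> V -> F).
Hypothesis b_sp : scalar_product b.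

Lemma spC u v : b u v = b v u.
Proof. by case: b_sp. Qed.

Lemma spDl u v w : b (u + v) w = b u w + b v w.
Proof. by case: b_sp => _ linb _; rewrite -{1}[u]scale1r linb mul1r. Qed.

Lemma sp0l w : b 0 w = 0.
Proof. by apply: (addrI (b 0 w)); rewrite -spDl !addr0. Qed.

Lemma spZl a u w : b (a *: u) w = a * b u w.
Proof. by case: b_sp => _ linb _; rewrite -[a *: u]addr0 linb sp0l addr0. Qed.

Lemma spDr u v w : b w (u + v) = b w u + b w v.
Proof. by rewrite !(spC w) spDl. Qed.

Lemma spZr a u w : b w (a *: u) = a * b w u.
Proof. by rewrite !(spC w) spZl. Qed.

Lemma sp0r w : b w 0 = 0.
Proof. by rewrite spC sp0l. Qed.

End ScalarProduct.

Section CyclePairing.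
Variables (F : fieldType) (V : vectType F) (b : V -> V -> F) (T : 'End(V)) (lam : F).
Hypotheses (b_sp : scalar_product b) (T_sa : self_adjoint b T).
Local Notation U := (Uop T lam).

Lemma sp_Uop u w : b (U u) w = b u (U w).
Proof. by rewrite /Uop -!scaleNr (spDl b_sp) (spDr b_sp) (spZl b_sp) (spZr b_sp) T_sa. Qed.

Lemma sp_iter_Uop n u w : b (iter n U u) w = b u (iter n U w).
Proof. by elim: n w => [|n IHn] w //=; rewrite sp_Uop IHn -iterSr. Qed.

Definition cyc_pairing y k := b y (iter k U y).

Lemma cyc_pairing_shift a m y k :
  cyc_pairing (a *: iter m U y + y) k =
  a ^+ 2 * cyc_pairing y (k + m.*2) + 2%:R * a * cyc_pairing y (k + m) + cyc_pairing y k.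
Proof.
rewrite /cyc_pairing iter_UopP -iterD !(spDl b_sp) !(spZl b_sp) !(spDr b_sp) !(spZr b_sp).
rewrite !sp_iter_Uop -!iterD.
have -> : (m + (k + m) = k + m.*2)%N by lia.
by rewrite [(m + k)%N]addnC; ring.
Qed.

Variables (x : V) (p : nat).
Hypothesis Upx : iter p U x = 0.
Local Notation S := (cyc_span T lam x p).

Lemma cyc_pairing_ge y k : y \in S -> (p <= k)%N -> cyc_pairing y k = 0.
Proof.
by move=> y_in le_pk; rewrite /cyc_pairing (cyc_span_iter_Uop_eq0 Upx le_pk y_in) (sp0r b_sp).
Qed.

Variable eps : F.

Lemma skew_normal_cyc_vec y :
  (eps = 1 \/ eps = -1) -> y \in S ->
  (forall k, (k < p)%N -> cyc_pairing y k = if k == p.-1 then eps else 0) ->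
  skew_normal b (cyc_vec T lam y p) p eps.
Proof.
move=> eps_pm1 y_in pairing_y; split=> // i j /andP [i_gt0 le_i_p] /andP [j_gt0 le_j_p].
rewrite /cyc_vec sp_iter_Uop -iterD -/(cyc_pairing y _).
have [lt_p | le_p] := ltnP (p - i + (p - j)) p.
  by rewrite pairing_y //; congr (if _ then _ else _); apply/eqP/eqP; lia.
by rewrite cyc_pairing_ge //; case: eqP => //; lia.
Qed.

Section Normalization.
Hypotheses (two_neq0 : (2%:R : F) != 0) (eps_neq0 : eps != 0).

Definition normal_upto y n :=
  cyc_pairing y p.-1 = eps /\
  forall k, (p.-1 - n <= k < p.-1)%N -> cyc_pairing y k = 0.

Lemma normal_upto_step y n :
  y \in S -> (n < p.-1)%N -> normal_upto y n ->
  exists2 y', y' \in S & normal_upto y' n.+1.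
Proof.
move=> y_in lt_n_p [y_last y_low]; have vanish := cyc_pairing_ge y_in.
pose k0 := (p.-1 - n.+1)%N.
pose a := - cyc_pairing y k0 / (2%:R * eps).
exists (a *: iter n.+1 U y + y); first by rewrite memvD // memvZ // cyc_span_iter_Uop.
split=> [|k /andP [k_ge k_lt]]; rewrite cyc_pairing_shift.
  by rewrite y_last !vanish; [ring | lia | lia].
have [-> | ne_k_k0] := eqVneq k k0.
  have -> : (k0 + n.+1 = p.-1)%N by lia.
  by rewrite y_last (vanish (k0 + _)%N) /a; [field; rewrite eps_neq0 two_neq0 | lia].
by rewrite (vanish (k + n.+1.*2)) ?(vanish (k + n.+1)) ?y_low; [ring | lia ..].
Qed.

Lemma exists_normal_generator y0 :
  y0 \in S -> cyc_pairing y0 p.-1 = eps ->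
  exists2 y, y \in S &
    forall k, (k < p)%N -> cyc_pairing y k = if k == p.-1 then eps else 0.
Proof.
move=> y0_in y0_last.
have [y y_in [y_last y_low]] : exists2 y, y \in S & normal_upto y p.-1.
  suff: forall n, (n <= p.-1)%N -> exists2 y, y \in S & normal_upto y n by apply.
  elim=> [|n IHn] le_n_p; first by exists y0 => //; split=> // k; lia.
  by have [y y_in y_n] := IHn (ltnW le_n_p); apply: normal_upto_step y_n.
exists y => // k lt_k_p; case: eqVneq => [-> // | ne_k]; apply: y_low; lia.
Qed.

End Normalization.

End CyclePairing.

Lemma cycle_skew_normal_generator (F : fieldType) (V : vectType F) (b : V -> V -> F)
    (T : 'End(V)) (lam : F) (x : V) (p : nat) (eps s : F) :
  scalar_product b -> self_adjoint b T -> (2%:R : F) != 0 -> cycle_len T lam x p ->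
  (eps = 1 \/ eps = -1) ->
  s ^+ 2 * b (cyc_vec T lam x p 1) (cyc_vec T lam x p p) = eps ->
  exists x' : V,
    [/\ x' \in cyc_span T lam x p, cycle_len T lam x' p,
        cyc_span T lam x' p = cyc_span T lam x p
      & skew_normal b (cyc_vec T lam x' p) p eps].
Proof.
move=> b_sp T_sa two_neq0 [p_gt0 Upx _] eps_pm1 s_eps.
have eps_neq0 : eps != 0 by case: eps_pm1 => ->; rewrite ?oppr_eq0 oner_eq0.
have sx_in : s *: x \in cyc_span T lam x p by rewrite memvZ // (iter_Uop_cyc_span _ _ _ p_gt0).
have sx_last : cyc_pairing b T lam (s *: x) p.-1 = eps.
  rewrite /cyc_pairing iter_UopZ (spZl b_sp) (spZr b_sp) mulrA -expr2 -s_eps /cyc_vec subnn.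
  by rewrite subn1 (spC b_sp x).
have [y y_in pairing_y] := exists_normal_generator b_sp T_sa Upx two_neq0 eps_neq0 sx_in sx_last.
have Upy := cyc_span_iter_Uop_eq0 Upx (leqnn p) y_in.
have y_last : cyc_pairing b T lam y p.-1 = eps by rewrite pairing_y ?eqxx ?ltn_predL.
have Up1y : iter p.-1 (Uop T lam) y != 0.
  by apply: contra_neq eps_neq0 => Up1y; rewrite -y_last /cyc_pairing Up1y (sp0r b_sp).
exists y; split=> //.
- exact: cycle_len_of_last p_gt0 Upy Up1y.
- exact: cyc_span_eq Upx y_in Up1y.
- exact: (skew_normal_cyc_vec b_sp T_sa Upx eps_pm1 y_in pairing_y).
Qed.

Theorem mainTheorem5 :
  (forall (R : rcfType) (V : vectType R) (b : V -> V -> R) (T : 'End(V))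
          (lam : R) (x : V) (p : nat),
     scalar_product b -> self_adjoint b T -> is_eigenvalue T lam ->
     cycle_len T lam x p ->
     b (cyc_vec T lam x p 1) (cyc_vec T lam x p p) != 0 ->
     exists x' : V,
       [/\ x' \in cyc_span T lam x p,
           cycle_len T lam x' p,
           cyc_span T lam x' p = cyc_span T lam x p
         & skew_normal b (cyc_vec T lam x' p) p
             (Num.sg (b (cyc_vec T lam x p 1) (cyc_vec T lam x p p)))])
  /\
  (forall (C : numClosedFieldType) (V : vectType C) (b : V -> V -> C) (T : 'End(V))
          (lam : C) (x : V) (p : nat),
     scalar_product b -> self_adjoint b T -> is_eigenvalue T lam ->
     cycle_len T lam x p ->
     b (cyc_vec T lam x p 1) (cyc_vec T lam x p p) != 0 ->
     exists x' : V,
       [/\ x' \in cyc_span T lam x p,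
           cycle_len T lam x' p,
           cyc_span T lam x' p = cyc_span T lam x p
         & skew_normal b (cyc_vec T lam x' p) p 1]).
Proof.
split=> [R | C] V b T lam x p b_sp T_sa _ x_cycle; set c := b _ _ => c_neq0.
- apply: (cycle_skew_normal_generator (s := (Num.sqrt `|c|)^-1) b_sp T_sa _ x_cycle).
  + by rewrite pnatr_eq0.
  + by rewrite -(neqr0_sign c_neq0); case: (c < 0); [right | left].
  + rewrite exprVn sqr_sqrtr ?normr_ge0 // -/c mulrC {1}(numEsg c) mulfK //.
    by rewrite normr_eq0.
- apply: (cycle_skew_normal_generator (s := sqrtC c^-1) b_sp T_sa _ x_cycle).
  + by rewrite pnatr_eq0.
  + by left.
  + by rewrite sqrtCK mulVf.
Qed.
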